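(* Let $G$ be a finite group with pairwise non-isomorphic irreducible complex representations $(V_1,\rho_1),\dots,(V_k,\rho_k)$, and let $X$ be a $G$-homogeneous space (a finite set with a transitive $G$-action). Let $Q$ be a probability distribution on $G$ and put $q:=\sum_{g\in G}Q(g)e_g\in\mathbb{C}G$. Then \[\frac{1}{|X|}\sum_{x\in X}\|q\cdot e_{x}-\overline{u}\|_{\rm TV}^2\leq \frac{1}{4}\sum_{V_j\neq {\rm triv}} m(V_j, \mathbb{C} X) \|\hat{Q}(\rho_j)\|_{\rm Fb}^2\] and \[\frac{1}{|X|}\sum_{x\in X}\|q\cdot e_{x}-\overline{u}\|_{\rm TV}^2 \geq \frac{1}{4|X|}\sum_{V_j\neq {\rm triv}} m(V_j, \mathbb{C} X) \|\hat{Q}(\rho_j)\|_{\rm Fb}^2,\] where the sums run over the nontrivial irreducible representations. If furthermore $\|q\cdot e_{x}\|_2$ is independent of $x\in X$, then for every $x\in X$ \[\frac{1}{4|X|}\sum_{V_j\neq {\rm triv}} m(V_j, \mathbb{C} X) \|\hat{Q}(\rho_j)\|_{\rm Fb}^2\leq \|q\cdot e_{x}-\overline{u}\|_{\rm TV}^2\leq \frac{1}{4}\sum_{V_j\neq {\rm triv}} m(V_j, \mathbb{C} X) \|\hat{Q}(\rho_j)\|_{\rm Fb}^2.\]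
   Context: $\mathbb{C}G$ is the group algebra with basis $\{e_g\}_{g\in G}$ and product $e_ge_h=e_{gh}$. $\mathbb{C}X$ is the complex vector space with basis $\{e_x:x\in X\}$, made into a $\mathbb{C}G$-module by $e_g\cdot e_x:=e_{g(x)}$ extended linearly; so $q\cdot e_x=\sum_{g}Q(g)e_{g(x)}$. Elements $h=\sum_x h(x)e_x$ of $\mathbb{C}X$ have $\|h\|_{\rm TV}:=\frac12\sum_x|h(x)|$ and $\|h\|_2:=(\sum_x|h(x)|^2)^{1/2}$. $\overline{u}:=\frac{1}{|X|}\sum_{x\in X}e_x$. $m(V_j,\mathbb{C}X)$ is the multiplicity of $V_j$ in the decomposition of the representation $\mathbb{C}X$ into irreducibles. Each $V_j$ is equipped with a $G$-invariant Hermitian inner product and a fixed orthonormal basis $B_j$; the Fourier transform of $Q$ at $\rho_j$ is the matrix $\hat{Q}(\rho_j):=\sum_{g\in G}Q(g)[\rho_j(g)]_{B_j}$. For a matrix $A$, $\|A\|_{\rm Fb}^2:={\rm Tr}(AA^* )$. *)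

From HB Require Import structures.
From mathcomp Require Import all_boot all_order all_algebra all_fingroup.
From mathcomp Require Import mxrepresentation.
Set Implicit Arguments. Unset Strict Implicit. Unset Printing Implicit Defensive.
Import Order.TTheory GRing.Theory Num.Theory.
Local Open Scope ring_scope.

Section Defs.
Variables (C : numClosedFieldType) (gT : finGroupType) (G : {group gT}).
Variables (T : finType) (act : gT -> T -> T).

Definition is_left_action :=
  (forall x, act 1%g x = x) /\
  (forall g h x, g \in G -> h \in G -> act (g * h)%g x = act g (act h x)).

Definition is_transitive :=
  (0 < #|T|)%N /\ (forall x y, exists2 g, g \in G & act g x = y).

Definition basisX (x : T) : {ffun T -> C} := [ffun y => (y == x)%:R].

Definition qdotX (Q : gT -> C) (x : T) : {ffun T -> C} :=
  [ffun y => \sum_(g in G) Q g * basisX (act g x) y].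

Definition ubar : {ffun T -> C} := [ffun y => #|T|%:R^-1 * \sum_(x : T) basisX x y].

Definition tv_norm (h : {ffun T -> C}) : C := 2^-1 * \sum_(x : T) `|h x|.
Definition l2_norm (h : {ffun T -> C}) : C := sqrtC (\sum_(x : T) `|h x| ^+ 2).

(* Matrix of g acting on CX in the basis (e_x), column convention:
   entry (x, y) is the coefficient of e_x in g . e_y. Indices via enum. *)
Definition permX_mx (g : gT) : 'M[C]_#|T| :=
  \matrix_(i, j) ((enum_val i == act g (enum_val j))%:R).

(* m(V, CX) := dim Hom_G(V, CX), the dimension of the space of intertwiners
   (matrices A with A rho(g) = [g]_CX A for all g in G). *)
Definition multX n (rho : mx_representation C G n) : nat :=
  \dim (\bigcap_(g in G)
          lker (linfun (fun A : 'M[C]_(#|T|, n) => A *m rho g - permX_mx g *m A)))%VS.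

End Defs.

Definition fourier (C : numClosedFieldType) (gT : finGroupType) (G : {group gT})
  n (rho : mx_representation C G n) (Q : gT -> C) : 'M[C]_n :=
  \sum_(g in G) Q g *: rho g.

Definition fb2 (C : numClosedFieldType) m n (A : 'M[C]_(m, n)) : C :=
  \tr (A *m (map_mx Num.conj A)^T).

Definition unitary_mx (C : numClosedFieldType) n (A : 'M[C]_n) : Prop :=
  A *m (map_mx Num.conj A)^T = 1%:M.

Definition is_trivial_repr (C : numClosedFieldType) (gT : finGroupType)
  (G : {group gT}) n (rho : mx_representation C G n) : bool :=
  (n == 1)%N && [forall g in G, rho g == 1%:M].

From HB Require Import structures.
From mathcomp Require Import all_boot all_order all_algebra all_fingroup.
From mathcomp Require Import mxrepresentation pgroup.
Set Implicit Arguments. Unset Strict Implicit. Unset Printing Implicit Defensive.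
Import Order.TTheory GRing.Theory Num.Theory.
Local Open Scope ring_scope.

(* Write a_x := q.e_x.  Expanding the squares, sum_x ||a_x||_2^2 is
   sum_{g,h} Q(g) Q(h) chi_X(h^-1 g), where chi_X is the character of the
   permutation representation CX.  Since chi_X = sum_j m(V_j, CX) chi_j and, for
   unitary rho_j and real Q, sum_{g,h} Q(g) Q(h) chi_j(h^-1 g) = ||Q^(rho_j)||_Fb^2,
   this is the full sum over all j.  By transitivity (Burnside's lemma) the
   trivial representation occurs once in CX, and contributes 1.  As the entries
   of a_x sum to 1, ||a_x - ubar||_2^2 = ||a_x||_2^2 - 1/|X|, so the right-hand
   sum S is sum_x ||a_x - ubar||_2^2.  The four bounds then follow from
   ||h||_2^2 <= 4 ||h||_TV^2 <= |X| ||h||_2^2 (the upper one by Cauchy-Schwarz).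
   The multiplicities m(V, CX), defined as dimensions of intertwiner spaces,
   are traces of the averaging projection onto those spaces; Schur's lemma
   then identifies them with the coefficients of chi_X on the irreducible
   characters. *)

Section MatrixSpaces.
Variable F : fieldType.

Lemma mxtrace_idem k (A : 'M[F]_k) : A *m A = A -> \tr A = (\rank A)%:R.
Proof.
move: (mulmx_base A) (col_base_full A) (row_base_free A).
move: (col_base A) (row_base A) => Cb Rb defA /row_fullP[Ci CiCb] Rb_free AA.
(* In the rank factorisation A = Cb Rb, idempotence forces Rb Cb = 1. *)
have RbCb : Rb *m Cb = 1%:M.
  have eqCR : Cb *m (Rb *m Cb) *m Rb = Cb *m 1%:M *m Rb.
    by rewrite mulmx1 mulmxA defA -mulmxA defA AA.
  move: (congr1 (mulmx Ci) (row_free_inj Rb_free eqCR)).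
  by rewrite !mulmxA CiCb !mul1mx.
by rewrite -{1}defA mxtrace_mulC RbCb mxtrace1.
Qed.

Lemma linfun_linE (aT rT : vectType F) (f : aT -> rT) : linear f -> linfun f =1 f.
Proof.
move=> linf; pose Lf : {linear aT -> rT} := HB.pack f (GRing.isLinear.Build F aT rT *:%R f linf).
exact: (lfunE Lf).
Qed.

Lemma mxtrace_lin_mx m n (f : 'M[F]_(m, n) -> 'M[F]_(m, n)) :
  \tr (lin_mx f) = \sum_a \sum_b f (delta_mx a b) a b.
Proof.
rewrite /mxtrace (reindex _ (curry_mxvec_bij m n)) pair_big /=.
by apply: eq_bigr => -[a b] _; rewrite mxE /= vec_mx_delta mxvecE.
Qed.

Lemma mul_delta_mxE m n p q (X : 'M[F]_(m, n)) (Y : 'M[F]_(p, q)) a b i j :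
  (X *m delta_mx a b *m Y) i j = X i a * Y b j.
Proof.
rewrite mxE (bigD1 b) //= big1 ?addr0 => [|l nlb].
  rewrite mxE (bigD1 a) //= big1 ?addr0 => [|c nca]; first by rewrite mxE !eqxx mulr1.
  by rewrite mxE (negbTE nca) mulr0.
by rewrite mxE big1 ?mul0r // => c _; rewrite mxE (negbTE nlb) andbF mulr0.
Qed.

Section VectorMatrix.
Import VectorInternalTheory.

Lemma dim_limg_lin_mx m n (f : {linear 'M[F]_(m, n) -> 'M[F]_(m, n)}) :
  \dim (limg (linfun f)) = \rank (lin_mx f).
Proof.
(* f2mx and lin_mx represent f in the coordinates v2r and mxvec respectively;
   B and Bi convert between the two. *)
pose B := lin1_mx (mxvec \o (r2v : 'rV_(dim 'M[F]_(m, n)) -> 'M[F]_(m, n))).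
pose Bi := lin1_mx ((v2r : 'M[F]_(m, n) -> _) \o (vec_mx : 'rV_(m * n) -> _)).
have BiB : Bi *m B = 1%:M.
  by apply/row_matrixP => i; rewrite !rowE mulmxA !mul_rV_lin1 /= v2rK vec_mxK mulmx1.
have f2mxE : f2mx (linfun f) = B *m lin_mx f *m Bi.
  apply/row_matrixP => i; rewrite !rowE !mulmxA mul_rV_lin1 mul_rV_lin.
  by rewrite mul_rV_lin1 /= mxvecK unlock /= mul_rV_lin1 /= mxvecK.
have -> : \dim (limg (linfun f)) = \rank (f2mx (linfun f)).
  by rewrite unlock /dimv /= genmxE genmx1 mul1mx.
apply/eqP; rewrite eqn_leq f2mxE (leq_trans (mxrankM_maxl _ _)) ?mxrankM_maxr //=.
rewrite -{1}[lin_mx f]mul1mx -{1}[lin_mx f]mulmx1 -BiB !mulmxA.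
by rewrite (leq_trans (mxrankM_maxl _ _)) // -!mulmxA mxrankM_maxr.
Qed.
End VectorMatrix.

Lemma dim_limg_idem m n (f : {linear 'M[F]_(m, n) -> 'M[F]_(m, n)}) :
  (forall A, f (f A) = f A) -> (\dim (limg (linfun f)))%:R = \tr (lin_mx f).
Proof.
move=> ff; rewrite dim_limg_lin_mx mxtrace_idem //.
by apply/row_matrixP => i; rewrite !rowE mulmxA !mul_rV_lin /= mxvecK ff.
Qed.

End MatrixSpaces.

Section HomSpace.
Variables (F : fieldType) (gT : finGroupType) (G : {group gT}).

Lemma sumr_mulgr (V : nmodType) x (h : gT -> V) :
  x \in G -> \sum_(g in G) h (g * x)%g = \sum_(g in G) h g.
Proof.
move=> Gx; rewrite [RHS](reindex_inj (mulIg x)) /=.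
by apply: eq_bigl => g; rewrite groupMr.
Qed.

Lemma sumr_invg (V : nmodType) (h : gT -> V) :
  \sum_(g in G) h (g^-1)%g = \sum_(g in G) h g.
Proof.
by rewrite [RHS](reindex_inj invg_inj); apply: eq_bigl => g; rewrite /= groupV.
Qed.

Definition hom_space m n (s : mx_representation F G m) (r : mx_representation F G n) :
    {vspace 'M[F]_(m, n)} :=
  (\bigcap_(g in G) lker (linfun (fun A : 'M[F]_(m, n) => A *m r g - s g *m A)))%VS.

Lemma hom_spaceP m n (s : mx_representation F G m) (r : mx_representation F G n) A :
  reflect (forall g, g \in G -> A *m r g = s g *m A) (A \in hom_space s r).
Proof.
have linE g : linear (fun A : 'M[F]_(m, n) => A *m r g - s g *m A).
  move=> a B1 B2; rewrite mulmxDl mulmxDr -scalemxAl -scalemxAr.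
  by rewrite scalerBr addrACA opprD.
rewrite memvE; apply: (iffP subv_bigcapP) => homA g Gg.
  by move: (homA g Gg); rewrite -memvE memv_ker linfun_linE // subr_eq0 => /eqP.
by rewrite -memvE memv_ker linfun_linE // subr_eq0 homA.
Qed.

Section Averaging.
Hypothesis F'G : ([pchar F]^'.-group G)%g.
Variables (m n : nat) (s : mx_representation F G m) (r : mx_representation F G n).

Definition hom_avg (A : 'M[F]_(m, n)) : 'M[F]_(m, n) :=
  #|G|%:R^-1 *: \sum_(g in G) s (g^-1)%g *m A *m r g.

Fact hom_avg_is_linear : linear hom_avg.
Proof.
move=> a A B; rewrite /hom_avg scalerA mulrC -scalerA -scalerDr; congr (_ *: _).
rewrite scaler_sumr -big_split; apply: eq_bigr => g _ /=.
by rewrite mulmxDr mulmxDl -scalemxAr -scalemxAl.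
Qed.

HB.instance Definition _ :=
  GRing.isLinear.Build F 'M[F]_(m, n) 'M[F]_(m, n) _ hom_avg hom_avg_is_linear.

Lemma hom_avg_hom A : hom_avg A \in hom_space s r.
Proof.
apply/hom_spaceP => h Gh; rewrite -scalemxAl -scalemxAr; congr (_ *: _).
rewrite mulmx_suml mulmx_sumr -(sumr_mulgr _ (groupVr Gh)).
apply: eq_bigr => g Gg.
rewrite invMg invgK repr_mxM ?groupV // -!mulmxA -repr_mxM ?groupV ?mulgKV //.
by rewrite groupM ?groupV.
Qed.

Lemma hom_avg_id A : A \in hom_space s r -> hom_avg A = A.
Proof.
move/hom_spaceP => homA; rewrite /hom_avg (eq_bigr (fun _ => A)) => [|g Gg].
  by rewrite sumr_const -scaler_nat scalerA mulVf ?scale1r // -pcharf'_nat.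
by rewrite -mulmxA homA // mulmxA -repr_mxM ?groupV // mulVg repr_mx1 mul1mx.
Qed.

Lemma hom_space_limg : hom_space s r = limg (linfun hom_avg).
Proof.
apply/vspaceP => A; apply/idP/idP => [homA | /memv_imgP [B _ ->]].
  by rewrite -(hom_avg_id homA) -lfunE memv_img ?memvf.
by rewrite lfunE hom_avg_hom.
Qed.

Lemma dim_hom_space :
  (\dim (hom_space s r))%:R =
    #|G|%:R^-1 * \sum_(g in G) \tr (s (g^-1)%g) * \tr (r g).
Proof.
have avgK A : hom_avg (hom_avg A) = hom_avg A by rewrite hom_avg_id ?hom_avg_hom.
rewrite hom_space_limg dim_limg_idem // mxtrace_lin_mx.
under eq_bigr => a _ do under eq_bigr => b _ do
  rewrite /hom_avg mxE summxE (eq_bigr _ (fun g _ => mul_delta_mxE _ _ _ _ _ _)).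
under eq_bigr => a _ do rewrite -mulr_sumr.
rewrite -mulr_sumr; congr (_ * _).
under eq_bigr => a _ do rewrite exchange_big.
rewrite exchange_big; apply: eq_bigr => g Gg.
by rewrite /mxtrace mulr_suml; apply: eq_bigr => a _; rewrite mulr_sumr.
Qed.

End Averaging.
End HomSpace.

Section Schur.
Variables (F : fieldType) (gT : finGroupType) (G : {group gT}).

Lemma hom_irr_rsim m n (s : mx_representation F G m) (r : mx_representation F G n) A :
    mx_irreducible s -> mx_irreducible r -> A \in hom_space s r -> A != 0 ->
  mx_rsim s r.
Proof.
move=> /mx_irrP[_ irr_s] /mx_irrP[_ irr_r] /hom_spaceP homA nzA.
have A_full : row_full A.
  rewrite -(eq_row_full (genmxE A)) irr_r // -?mxrank_eq0 ?genmxE ?mxrank_eq0 //.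
  rewrite (eqmx_module _ (genmxE A)); apply/mxmoduleP => g Gg.
  by rewrite homA // submxMl.
have A_free : row_free A.
  rewrite -kermx_eq0; apply: contraNT nzA => nzK.
  have kerA_mod : mxmodule s (kermx A).
    apply/mxmoduleP => g Gg; apply/sub_kermxP.
    by rewrite -mulmxA -homA // mulmxA mulmx_ker mul0mx.
  by rewrite -(mul1mx A); apply/eqP/sub_kermxP; rewrite sub1mx irr_s.
exists A => // [|g Gg]; last by rewrite homA.
by move: A_full A_free; rewrite /row_full /row_free => /eqP-> /eqP.
Qed.

Lemma dim_hom_space_abs_irr n (r : mx_representation F G n) :
  mx_absolutely_irreducible r -> \dim (hom_space r r) = 1%N.
Proof.
move=> abs_r; have [n_gt0 _] := mx_abs_irrP abs_r.
have -> : hom_space r r = <[1%:M]>%VS.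
  apply/vspaceP => A; apply/idP/idP => [/hom_spaceP homA | /vlineP[a ->]].
    have /is_scalar_mxP[a ->] : is_scalar_mx A.
      by apply: (mx_abs_irr_cent_scalar abs_r); apply/centgmxP => g Gg; rewrite homA.
    by rewrite -[a%:M]scalemx1; apply: memvZ; apply: memv_line.
  by apply: memvZ; apply/hom_spaceP => g Gg; rewrite mul1mx mulmx1.
by rewrite dim_vline -mxrank_eq0 mxrank1 -lt0n n_gt0.
Qed.

End Schur.

Section IrreducibleFamily.
Variables (F : closedFieldType) (gT : finGroupType) (G : {group gT}).
Hypothesis F'G : ([pchar F]^'.-group G)%g.
Variables (k : nat) (n : 'I_k -> nat) (rho : forall j : 'I_k, mx_representation F G (n j)).
Hypothesis rho_irr : forall j, mx_irreducible (rho j).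
Hypothesis rho_distinct : forall i j, mx_rsim (rho i) (rho j) -> i = j.
Hypothesis rho_complete : forall m (r : mx_representation F G m),
  mx_irreducible r -> exists j, mx_rsim (rho j) r.

Lemma dim_hom_space_irr i j : \dim (hom_space (rho i) (rho j)) = (i == j).
Proof.
have [<-|neq_ij] := eqVneq i j.
  exact/dim_hom_space_abs_irr/group_closure_closed_field/rho_irr.
apply/eqP; rewrite dimv_eq0 -subv0; apply/subvP => A homA; rewrite memv0.
by apply: contraNT neq_ij => nzA; apply/eqP/rho_distinct/(hom_irr_rsim _ _ homA).
Qed.

Lemma mxtrace_irr_coef m (s : mx_representation F G m) :
  exists c : 'I_k -> nat,
    {in G, forall y, \tr (s y) = \sum_j (c j)%:R * \tr (rho j y)}.
Proof.
pose sG := DecSocleType s.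
have Socle1 : (Socle sG :=: 1%:M)%MS.
  by rewrite reducible_Socle1 //; apply: mx_Maschke_pchar.
have [J simJ] := fin_all_exists (fun W : sG => rho_complete (socle_irr W)).
exists (fun j => \sum_(W : sG | J W == j) socle_mult W)%N => y Gy.
rewrite -(mxtrace_submod1 (Socle_module sG) Socle1 Gy) (mxtrace_Socle sG Gy).
rewrite (partition_big J predT) //=; apply: eq_bigr => j _.
rewrite natr_sum mulr_suml; apply: eq_bigr => W /eqP <-.
by rewrite (mxtrace_rsim (simJ W) Gy) mulr_natl.
Qed.

Lemma mxtrace_irr_decomp m (s : mx_representation F G m) :
  {in G, forall y, \tr (s y) = \sum_j (\dim (hom_space s (rho j)))%:R * \tr (rho j y)}.
Proof.
have [c trs] := mxtrace_irr_coef s.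
suff dimE j : (\dim (hom_space s (rho j)))%:R = (c j)%:R :> F.
  by move=> y Gy; rewrite trs //; apply: eq_bigr => j _; rewrite dimE.
transitivity (\sum_i (c i)%:R * (\dim (hom_space (rho i) (rho j)))%:R : F).
  rewrite dim_hom_space // mulr_sumr.
  under eq_bigr => g Gg do rewrite (trs _ (groupVr Gg)) !mulr_suml mulr_sumr.
  rewrite exchange_big; apply: eq_bigr => i _.
  rewrite dim_hom_space // [RHS]mulrCA !mulr_sumr; apply: eq_bigr => g _.
  by rewrite !mulrA.
rewrite (bigD1 j) //= dim_hom_space_irr eqxx mulr1 big1 ?addr0 // => i /negbTE neq_ij.
by rewrite dim_hom_space_irr neq_ij mulr0.
Qed.
End IrreducibleFamily.

Section PermutationRepresentation.
Variables (C : numClosedFieldType) (gT : finGroupType) (G : {group gT}).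
Variables (T : finType) (act : gT -> T -> T).
Hypothesis act_action : is_left_action G act.

Lemma lact1 x : act 1%g x = x.
Proof. by case: act_action. Qed.

Lemma lactM g h x : g \in G -> h \in G -> act (g * h)%g x = act g (act h x).
Proof. by case: act_action => _; apply. Qed.

Lemma lactK g x : g \in G -> act (g^-1)%g (act g x) = x.
Proof. by move=> Gg; rewrite -lactM ?groupV // mulVg lact1. Qed.

Lemma lactKV g x : g \in G -> act g (act (g^-1)%g x) = x.
Proof. by move=> Gg; rewrite -lactM ?groupV // mulgV lact1. Qed.

Lemma permX_mx_repr : mx_repr G (permX_mx C act).
Proof.
split=> [|g h Gg Gh]; apply/matrixP => i j; rewrite !mxE.
  by rewrite lact1 (inj_eq enum_val_inj).
rewrite lactM // (bigD1 (enum_rank (act h (enum_val j)))) //= big1 ?addr0 => [|l].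
  by rewrite !mxE enum_rankK eqxx mulr1.
rewrite !mxE => /negbTE neq_l; suff -> : (enum_val l == act h (enum_val j)) = false.
  by rewrite mulr0.
by apply: contraFF neq_l => /eqP <-; rewrite enum_valK.
Qed.

Definition permX_repr := MxRepresentation permX_mx_repr.

Lemma multXE n (r : mx_representation C G n) :
  multX act r = \dim (hom_space permX_repr r).
Proof. by []. Qed.

Lemma mxtrace_permX g : \tr (permX_repr g) = \sum_(x : T) (x == act g x)%:R.
Proof.
by rewrite /mxtrace (big_enum_val (A := T)); apply: eq_bigr => i _; rewrite mxE.
Qed.

Lemma mxtrace_permX_mulVg g h : g \in G -> h \in G ->
  \tr (permX_repr (h^-1 * g)%g) = \sum_(x : T) (act g x == act h x)%:R.
Proof.
move=> Gg Gh; rewrite mxtrace_permX; apply: eq_bigr => x _.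
rewrite lactM ?groupV //; suff -> : (x == act (h^-1)%g (act g x)) = (act g x == act h x) by [].
apply/idP/idP => /eqP e; first by rewrite {2}e lactKV.
by rewrite e lactK.
Qed.

Hypothesis act_transitive : is_transitive G act.

Lemma sum_mxtrace_permX : \sum_(g in G) \tr (permX_repr g) = #|G|%:R.
Proof.
have [/card_gt0P[x0 _] transG] := act_transitive.
under eq_bigr => g _ do rewrite mxtrace_permX.
rewrite exchange_big /=.
transitivity (\sum_(x : T) \sum_(g in G) (act g x0 == x)%:R : C).
  apply: eq_bigr => x _; have [b Gb <-] := transG x0 x.
  rewrite -(sumr_mulgr (fun g => (act g x0 == act b x0)%:R : C) Gb).
  by apply: eq_bigr => g Gg; rewrite lactM // eq_sym.
rewrite exchange_big /= -sumr_const; apply: eq_bigr => g Gg.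
rewrite (bigD1 (act g x0)) //= eqxx big1 ?addr0 // => x neq_x.
by rewrite eq_sym (negbTE neq_x).
Qed.

End PermutationRepresentation.

Section TrivialRepresentation.
Variables (C : numClosedFieldType) (gT : finGroupType) (G : {group gT}).

Definition triv_mx (g : gT) : 'M[C]_1 := 1%:M.

Lemma triv_mx_repr : mx_repr G triv_mx.
Proof. by split=> // g h _ _; rewrite mulmx1. Qed.

Definition triv_repr := MxRepresentation triv_mx_repr.

Lemma triv_repr_irr : mx_irreducible triv_repr.
Proof. exact/mx_abs_irrW/linear_mx_abs_irr. Qed.

Lemma is_trivial_reprP n (r : mx_representation C G n) :
  reflect (mx_rsim r triv_repr) (is_trivial_repr r).
Proof.
apply: (iffP andP) => [[/eqP n1 /forall_inP r1] | sim_r].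
  subst n; exists 1%:M => // [|g Gg]; first by rewrite row_free_unit unitmx1.
  by rewrite (eqP (r1 g Gg)) mulmx1.
split; first by rewrite (mxrank_rsim sim_r).
by apply/forall_inP => g Gg; apply/eqP/(mx_rsim_scalar Gg (mx_rsim_sym sim_r)).
Qed.

Lemma trivial_index_unique k (n : 'I_k -> nat)
    (rho : forall j : 'I_k, mx_representation C G (n j)) :
    (forall i j, mx_rsim (rho i) (rho j) -> i = j) ->
    (forall m (r : mx_representation C G m), mx_irreducible r -> exists j, mx_rsim (rho j) r) ->
  exists j0, forall j, is_trivial_repr (rho j) = (j == j0).
Proof.
move=> rho_distinct rho_complete; have [j0 sim_j0] := rho_complete _ _ triv_repr_irr.
exists j0 => j; apply/is_trivial_reprP/eqP => [sim_j | -> //].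
exact/rho_distinct/(mx_rsim_trans sim_j (mx_rsim_sym sim_j0)).
Qed.

End TrivialRepresentation.

Section FourierTransform.
Variables (C : numClosedFieldType) (gT : finGroupType) (G : {group gT}).

Lemma unitary_repr_adj n (r : mx_representation C G n) g : g \in G ->
  unitary_mx (r g) -> (map_mx Num.conj (r g))^T = r (g^-1)%g.
Proof.
move=> Gg r_unitary; have [r_unit _] := mulmx1_unit r_unitary.
by rewrite repr_mxV // -[LHS](mulKmx r_unit) r_unitary mulmx1.
Qed.

Lemma fb2_fourier n (r : mx_representation C G n) (Q : gT -> C) :
    (forall g, g \in G -> unitary_mx (r g)) -> (forall g, g \in G -> Q g \is Num.real) ->
  fb2 (fourier r Q) = \sum_(g in G) \sum_(h in G) Q g * Q h * \tr (r (h^-1 * g)%g).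
Proof.
move=> r_unitary Q_real; rewrite /fb2 /fourier.
have -> : (map_mx Num.conj (\sum_(g in G) Q g *: r g))^T = \sum_(h in G) Q h *: r (h^-1)%g.
  rewrite !raddf_sum; apply: eq_bigr => h Gh /=.
  by rewrite map_mxZ linearZ /= (unitary_repr_adj Gh (r_unitary h Gh)) conj_Creal ?Q_real.
rewrite mulmx_suml raddf_sum; apply: eq_bigr => g Gg.
rewrite mulmx_sumr raddf_sum; apply: eq_bigr => h Gh /=.
rewrite -scalemxAl -scalemxAr !linearZ /= mxtrace_mulC -repr_mxM ?groupV //.
by rewrite mulrA.
Qed.

End FourierTransform.

Section SumInequalities.
Variables (R : numDomainType) (T : finType).

Lemma sum_sqr_le_sqr_sum (r : T -> R) : (forall y, 0 <= r y) ->
  \sum_y r y ^+ 2 <= (\sum_y r y) ^+ 2.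
Proof.
move=> r_ge0; rewrite expr2 mulr_suml; apply: ler_sum => y _.
rewrite mulr_sumr (bigD1 y) //= expr2 lerDl.
by apply: sumr_ge0 => z _; rewrite mulr_ge0.
Qed.

Lemma sqr_sum_le_card_sum_sqr (r : T -> R) : (forall y, r y \is Num.real) ->
  (\sum_y r y) ^+ 2 <= #|T|%:R * \sum_y r y ^+ 2.
Proof.
move=> r_real; rewrite -(ler_pMn2r (_ : (0 < 2)%N)) // expr2 mulr_suml -sumrMnl.
apply: (@le_trans _ _ (\sum_y \sum_z (r y ^+ 2 + r z ^+ 2))).
  apply: ler_sum => y _; rewrite mulr_sumr -sumrMnl; apply: ler_sum => z _.
  exact: (real_leif_mean_square_scaled (r_real y) (r_real z)).1.
rewrite mulr_natl -mulrnA mulnC mulrnA.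
under eq_bigr => y _ do rewrite big_split /= sumr_const.
by rewrite big_split /= sumr_const sumrMnl mulr2n mulrnDl.
Qed.

End SumInequalities.

Section VectorNorms.
Variables (C : numClosedFieldType) (T : finType).

Lemma l2_norm_sqr (h : {ffun T -> C}) : l2_norm h ^+ 2 = \sum_x `|h x| ^+ 2.
Proof. exact: sqrtCK. Qed.

Lemma tv_norm_sqr (h : {ffun T -> C}) : tv_norm h ^+ 2 = 4^-1 * (\sum_x `|h x|) ^+ 2.
Proof. by rewrite exprMn exprVn -natrX. Qed.

Lemma tv_norm_sqr_ge (h : {ffun T -> C}) : 4^-1 * l2_norm h ^+ 2 <= tv_norm h ^+ 2.
Proof.
rewrite tv_norm_sqr l2_norm_sqr ler_wpM2l ?invr_ge0 ?ler0n //.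
by apply: sum_sqr_le_sqr_sum => x; apply: normr_ge0.
Qed.

Lemma tv_norm_sqr_le (h : {ffun T -> C}) :
  tv_norm h ^+ 2 <= 4^-1 * (#|T|%:R * l2_norm h ^+ 2).
Proof.
rewrite tv_norm_sqr l2_norm_sqr ler_wpM2l ?invr_ge0 ?ler0n //.
by apply: sqr_sum_le_card_sum_sqr => x; apply: normr_real.
Qed.

Lemma ubarE y : ubar C T y = #|T|%:R^-1.
Proof.
rewrite ffunE (bigD1 y) //= big1 ?addr0 => [|x neq_x]; rewrite ffunE ?eqxx ?mulr1 //.
by rewrite eq_sym (negbTE neq_x).
Qed.

Lemma l2_norm_sub_ubar (h : {ffun T -> C}) :
    (forall y, h y \is Num.real) -> \sum_y h y = 1 ->
  l2_norm (h - ubar C T) ^+ 2 = l2_norm h ^+ 2 - #|T|%:R^-1.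
Proof.
move=> h_real h_sum1; have T_neq0 : (#|T|%:R : C) != 0.
  apply: contra_eq_neq h_sum1 => /eqP; rewrite pnatr_eq0 => /eqP/card0_eq T0.
  by rewrite big_pred0 // eq_sym oner_neq0.
have sub_ubarE y : (h - ubar C T) y = h y - #|T|%:R^-1 by rewrite -(ubarE y) !ffunE.
rewrite !l2_norm_sqr.
under eq_bigr => y _ do rewrite sub_ubarE real_normK ?rpredB ?h_real ?rpredV ?realn //.
under [in RHS]eq_bigr => y _ do rewrite real_normK ?h_real //.
under eq_bigr => y _ do rewrite sqrrB.
rewrite !big_split /= sumrN sumr_const sumrMnl -mulr_suml h_sum1 mul1r.
rewrite -[_ ^+ 2 *+ _]mulr_natr expr2 -mulrA mulVf // mulr1 mulr2n.
by rewrite opprD addrA subrK.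
Qed.

End VectorNorms.

Section ActionOnDistribution.
Variables (C : numClosedFieldType) (gT : finGroupType) (G : {group gT}).
Variables (T : finType) (act : gT -> T -> T) (Q : gT -> C).

Lemma qdotXE x y : qdotX G act Q x y = \sum_(g in G) Q g * (y == act g x)%:R.
Proof. by rewrite ffunE; apply: eq_bigr => g _; rewrite ffunE. Qed.

Lemma sum_indicator (x : T) : \sum_(y : T) (y == x)%:R = 1 :> C.
Proof. by rewrite (bigD1 x) //= eqxx big1 ?addr0 // => y /negbTE->. Qed.

Lemma sum_qdotX x : \sum_y qdotX G act Q x y = \sum_(g in G) Q g.
Proof.
under eq_bigr => y _ do rewrite qdotXE.
by rewrite exchange_big; apply: eq_bigr => g _; rewrite -mulr_sumr sum_indicator mulr1.
Qed.

Hypothesis Q_real : forall g, g \in G -> Q g \is Num.real.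

Lemma qdotX_real x y : qdotX G act Q x y \is Num.real.
Proof. by rewrite qdotXE rpred_sum // => g Gg; rewrite rpredM ?Q_real ?realn. Qed.

Lemma sum_l2_norm_qdotX (act_action : is_left_action G act) :
  \sum_x l2_norm (qdotX G act Q x) ^+ 2 =
  \sum_(g in G) \sum_(h in G) Q g * Q h * \tr (permX_repr C act_action (h^-1 * g)%g).
Proof.
transitivity (\sum_x \sum_(g in G) \sum_(h in G) Q g * Q h * (act g x == act h x)%:R).
  apply: eq_bigr => x _; rewrite l2_norm_sqr.
  under eq_bigr => y _ do rewrite real_normK ?qdotX_real // qdotXE expr2 mulr_suml.
  rewrite exchange_big; apply: eq_bigr => g Gg.
  under eq_bigr => y _ do rewrite mulr_sumr.
  rewrite exchange_big; apply: eq_bigr => h Gh.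
  rewrite (bigD1 (act g x)) //= big1 ?addr0 => [|y /negbTE->]; last by rewrite mulr0 mul0r.
  by rewrite eqxx mulr1 mulrA.
rewrite exchange_big; apply: eq_bigr => g Gg.
rewrite exchange_big; apply: eq_bigr => h Gh.
by rewrite mxtrace_permX_mulVg // mulr_sumr.
Qed.

Hypothesis Q_sum1 : \sum_(g in G) Q g = 1.

Lemma l2_norm_qdotX_sub_ubar x :
  l2_norm (qdotX G act Q x - ubar C T) ^+ 2 = l2_norm (qdotX G act Q x) ^+ 2 - #|T|%:R^-1.
Proof. by apply: l2_norm_sub_ubar => [y|]; rewrite ?qdotX_real ?sum_qdotX. Qed.

End ActionOnDistribution.

Lemma num_pchar'_group (C : numClosedFieldType) (gT : finGroupType) (G : {group gT}) :
  ([pchar C]^'.-group G)%g.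
Proof. by apply/pgroupP => p _ _; rewrite inE /= pchar_num. Qed.

Section Plancherel.
Variables (C : numClosedFieldType) (gT : finGroupType) (G : {group gT}).
Variables (k : nat) (n : 'I_k -> nat) (rho : forall j : 'I_k, mx_representation C G (n j)).
Hypothesis rho_irr : forall j, mx_irreducible (rho j).
Hypothesis rho_unitary : forall j g, g \in G -> unitary_mx (rho j g).
Hypothesis rho_distinct : forall i j, mx_rsim (rho i) (rho j) -> i = j.
Hypothesis rho_complete : forall m (r : mx_representation C G m),
  mx_irreducible r -> exists j, mx_rsim (rho j) r.
Variables (T : finType) (act : gT -> T -> T).
Hypothesis act_action : is_left_action G act.
Variable Q : gT -> C.
Hypothesis Q_real : forall g, g \in G -> Q g \is Num.real.

Lemma sum_multX_fb2 :
  \sum_j (multX act (rho j))%:R * fb2 (fourier (rho j) Q) =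
  \sum_x l2_norm (qdotX G act Q x) ^+ 2.
Proof.
rewrite (sum_l2_norm_qdotX Q_real act_action).
under eq_bigr => j _ do rewrite (fb2_fourier (rho_unitary j) Q_real) mulr_sumr.
rewrite exchange_big; apply: eq_bigr => g Gg.
under eq_bigr => j _ do rewrite mulr_sumr.
rewrite exchange_big; apply: eq_bigr => h Gh.
rewrite (mxtrace_irr_decomp (num_pchar'_group C G) rho_irr rho_distinct rho_complete).
  by rewrite mulr_sumr; apply: eq_bigr => j _; rewrite multXE mulrCA.
by rewrite groupM ?groupV.
Qed.

Hypothesis act_transitive : is_transitive G act.
Hypothesis Q_sum1 : \sum_(g in G) Q g = 1.

Lemma multX_trivial m (r : mx_representation C G m) :
  is_trivial_repr r -> (multX act r)%:R = 1 :> C.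
Proof.
case/andP => /eqP m1 /forall_inP r1; subst m.
rewrite multXE dim_hom_space ?num_pchar'_group //.
under eq_bigr => g Gg do rewrite (eqP (r1 g Gg)) mxtrace1 mulr1.
by rewrite (sumr_invg G (fun g => \tr (permX_repr C act_action g))) sum_mxtrace_permX // mulVf // pnatr_eq0 -lt0n cardG_gt0.
Qed.

Lemma fb2_fourier_trivial m (r : mx_representation C G m) :
  is_trivial_repr r -> fb2 (fourier r Q) = 1.
Proof.
case/andP => /eqP m1 /forall_inP r1; subst m.
rewrite fb2_fourier // => [|g Gg]; last by rewrite /unitary_mx (eqP (r1 g Gg)) map_mx1 trmx1 mulmx1.
under eq_bigr => g Gg do under eq_bigr => h Gh do
  rewrite (eqP (r1 _ (groupM (groupVr Gh) Gg))) mxtrace1 mulr1.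
by under eq_bigr => g Gg do rewrite -mulr_sumr Q_sum1 mulr1.
Qed.

Lemma sum_nontrivial_multX_fb2 :
  \sum_(j < k | ~~ is_trivial_repr (rho j)) (multX act (rho j))%:R * fb2 (fourier (rho j) Q) =
  \sum_x l2_norm (qdotX G act Q x - ubar C T) ^+ 2.
Proof.
have [j0 trivE] := trivial_index_unique rho_distinct rho_complete.
have triv_j0 : is_trivial_repr (rho j0) by rewrite trivE.
have T_neq0 : (#|T|%:R : C) != 0 by rewrite pnatr_eq0 -lt0n; case: act_transitive.
under [RHS]eq_bigr => x _ do rewrite l2_norm_qdotX_sub_ubar //.
rewrite sumrB sumr_const -[_ *+ _]mulr_natr mulVf // -sum_multX_fb2 [in RHS](bigD1 j0) //=.
rewrite multX_trivial // fb2_fourier_trivial // mulr1 addrC addrK.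
by apply: eq_bigl => j; rewrite trivE.
Qed.

End Plancherel.

Theorem theorem1p1 (C : numClosedFieldType) (gT : finGroupType) (G : {group gT})
  (k : nat) (n : 'I_k -> nat) (rho : forall j : 'I_k, mx_representation C G (n j))
  (rho_irr : forall j, mx_irreducible (rho j))
  (rho_unitary : forall j g, g \in G -> unitary_mx (rho j g))
  (rho_distinct : forall i j, mx_rsim (rho i) (rho j) -> i = j)
  (rho_complete : forall m (r : mx_representation C G m),
      mx_irreducible r -> exists j, mx_rsim (rho j) r)
  (T : finType) (act : gT -> T -> T)
  (hact : is_left_action G act) (htrans : is_transitive G act)
  (Q : gT -> C) (Q_ge0 : forall g, g \in G -> 0 <= Q g)
  (Q_sum1 : \sum_(g in G) Q g = 1) :
  let S := \sum_(j < k | ~~ is_trivial_repr (rho j))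
             (multX act (rho j))%:R * fb2 (fourier (rho j) Q) in
  let d x := tv_norm (qdotX G act Q x - ubar C T) in
  [/\ #|T|%:R^-1 * \sum_(x : T) d x ^+ 2 <= 4^-1 * S,
      (4 * #|T|%:R)^-1 * S <= #|T|%:R^-1 * \sum_(x : T) d x ^+ 2
    & (forall x y, l2_norm (qdotX G act Q x) = l2_norm (qdotX G act Q y)) ->
      forall x, (4 * #|T|%:R)^-1 * S <= d x ^+ 2 <= 4^-1 * S].
Proof.
move=> S d.
have Q_real g : g \in G -> Q g \is Num.real by move/Q_ge0/ger0_real.
pose l x := l2_norm (qdotX G act Q x - ubar C T) ^+ 2.
have S_l : S = \sum_x l x by apply: sum_nontrivial_multX_fb2.
have T_neq0 : (#|T|%:R : C) != 0 by rewrite pnatr_eq0 -lt0n; case: htrans.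
have N_ge0 : 0 <= (#|T|%:R : C)^-1 by rewrite invr_ge0 ler0n.
split.
- rewrite S_l; apply: le_trans (ler_wpM2l N_ge0 (ler_sum _ (fun x _ => tv_norm_sqr_le _))) _.
  by rewrite -!mulr_sumr mulrCA mulKf.
- rewrite invfM [4^-1 * _]mulrC -mulrA S_l mulr_sumr ler_wpM2l //.
  by apply: ler_sum => x _; apply: tv_norm_sqr_ge.
move=> l2_const x; have S_lx : S = #|T|%:R * l x.
  rewrite S_l (eq_bigr (fun _ => l x)) ?sumr_const ?mulr_natl // => y _.
  by rewrite /l !l2_norm_qdotX_sub_ubar // (l2_const x y).
rewrite S_lx invfM -mulrA mulKf // tv_norm_sqr_ge /=.
exact: tv_norm_sqr_le.
Qed.
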